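(* Let $m \ge 1$, let $\omega_0 \in \mathbb{R}$, $\gamma > 0$, let $\tilde C \in M_m$ be invertible, and let $\tilde{\boldsymbol\kappa}, \tilde{\boldsymbol d} \in \mathbb{C}^m$ (column vectors). For $\omega \in \mathbb{R}$ define $$\tilde S(\omega) = \tilde C + \frac{\tilde{\boldsymbol d}\,\tilde{\boldsymbol\kappa}^T}{-i(\omega-\omega_0) + \gamma}, \qquad \tilde\rho = -\frac{\tilde{\boldsymbol\kappa}^T \tilde C^{-1}\tilde{\boldsymbol d}}{2\gamma} \in \mathbb{C}.$$ Then as $\omega$ runs over $\mathbb{R}$, $\det\tilde S(\omega)$ traces out a circle in $\mathbb{C}$ (with $\det \tilde S(\omega) \to \det\tilde C$ as $\omega \to \pm\infty$), and: if $\operatorname{Re}\tilde\rho = \tfrac12$ this circle passes through the origin; if $\operatorname{Re}\tilde\rho \neq \tfrac12$ then $\det\tilde S(\omega)\neq 0$ for all real $\omega$ and the winding number of $\det\tilde S$ about the origin satisfies $$\operatorname{wn}(\tilde S) = \begin{cases} 0, & \operatorname{Re}\tilde\rho < \tfrac12,\\ 1, & \operatorname{Re}\tilde\rho > \tfrac12.\end{cases}$$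
   Context: $M_m$ denotes the complex $m\times m$ matrices. The winding number is $\operatorname{wn}(\tilde S) = \frac{1}{2\pi i}\int_{-\infty}^{\infty} \frac{1}{\det\tilde S(\omega)}\frac{d \det\tilde S(\omega)}{d\omega}\,d\omega$, i.e. the net change of a continuous polar angle of $\det\tilde S(\omega)$, divided by $2\pi$, as $\omega$ goes from $-\infty$ to $+\infty$ (the curve closes up since both limits equal $\det\tilde C$). *)

From HB Require Import structures.
From mathcomp Require Import all_boot all_order all_algebra.
From mathcomp Require Import all_classical all_reals all_analysis.
From mathcomp Require Import complex.
Set Implicit Arguments. Unset Strict Implicit. Unset Printing Implicit Defensive.
Import Order.TTheory GRing.Theory Num.Theory.
Import numFieldNormedType.Exports.
Local Open Scope ring_scope.
Local Open Scope complex_scope.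
Local Open Scope classical_set_scope.

Definition polar_lift (R : realType) (f : R -> R[i]) (theta : R -> R) : Prop :=
  continuous theta /\
  forall w : R, f w = `|f w| * (cos (theta w) +i* sin (theta w)).

Definition winding_number_is (R : realType) (f : R -> R[i]) (n : int) : Prop :=
  (exists theta, polar_lift f theta) /\
  forall theta, polar_lift f theta ->
    exists a b : R,
      (theta x @[x --> -oo] --> a) /\ (theta x @[x --> +oo] --> b) /\
      b - a = (n%:~R) * (2 * pi).

Definition Stilde (R : realType) (m : nat) (C : 'M[R[i]]_m) (kappa d : 'cV[R[i]]_m)
  (w0 gamma w : R) : 'M[R[i]]_m :=
  C + ((- 'i%C * (w - w0)%:C + gamma%:C)^-1) *: (d *m kappa^T).

Definition rhotilde (R : realType) (m : nat) (C : 'M[R[i]]_m) (kappa d : 'cV[R[i]]_m)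
  (gamma : R) : R[i] :=
  - ((kappa^T *m invmx C *m d) ord0 ord0) / (2 * gamma)%:C.

From HB Require Import structures.
From mathcomp Require Import all_boot all_order all_algebra.
From mathcomp Require Import all_classical all_reals all_analysis.
From mathcomp Require Import complex.
From mathcomp Require Import ring lra.
Import Order.TTheory GRing.Theory Num.Theory.
Import numFieldNormedType.Exports.
Local Open Scope ring_scope.
Local Open Scope complex_scope.
Local Open Scope classical_set_scope.

(* With a := kappa^T C^-1 d, the matrix determinant lemma gives
   det S(w) = det C (1 + a / z(w)) where z(w) = gamma - i (w - w0) runs over the
   vertical line Re z = gamma.  Inversion maps that line onto the circle through
   0 with diameter [0, 1/gamma], minus 0, so det S runs over an affine image of
   it: a circle through det C, which contains 0 exactly when gamma + Re a =
   2 gamma (1/2 - Re rho) vanishes.  Otherwise det S = det C (z + a) / z, whose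
   argument is arg det C + arg (z + a) - arg z: along the lines Re z = gamma and
   Re z = gamma + Re a, arg z decreases by pi while arg (z + a) decreases by pi
   or increases by pi according to the sign of gamma + Re a, giving winding
   number 0 or 1.  Any two continuous arguments of a nonvanishing curve differ
   by a constant (a continuous function with values in 2 pi Z), so this does
   not depend on the chosen argument. *)

Lemma det1D_rank1 (F : comUnitRingType) (n : nat) (u : 'cV[F]_n) (v : 'rV[F]_n) :
  \det (1%:M + u *m v) = 1 + (v *m u) ord0 ord0.
Proof.
(* conjugating by unipotent block matrices turns 1 + u v into a
   block-triangular matrix with 1 + v u in a corner *)
have block_eq : block_mx 1%:M 0 v 1%:M *m block_mx (1%:M + u *m v) u 0 1%:M
                  *m block_mx 1%:M 0 (- v) 1%:M = block_mx 1%:M u 0 (1%:M + v *m u).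
  rewrite !mulmx_block !(mulmx1, mul1mx, mulmx0, mul0mx, addr0, add0r).
  rewrite !(mulmxN, mulNmx, mulmxDr, mulmxDl, mulmx1, mul1mx).
  congr block_mx; first by rewrite addrK.
  - by rewrite mulmxA -opprD [v *m u *m v + v]addrC subrr.
  - by rewrite addrC.
move/(congr1 determinant): block_eq.
rewrite !det_mulmx !det_lblock !det_ublock !det1 !mul1r !mulr1 det_mx11 => ->.
by rewrite !mxE eqxx.
Qed.

Lemma det_addmx_rank1 (F : comUnitRingType) (n : nat) (A : 'M[F]_n)
  (u : 'cV[F]_n) (v : 'rV[F]_n) : A \in unitmx ->
  \det (A + u *m v) = \det A * (1 + (v *m invmx A *m u) ord0 ord0).
Proof.
move=> A_unit.
have -> : A + u *m v = A *m (1%:M + (invmx A *m u) *m v).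
  by rewrite mulmxDr mulmx1 !mulmxA mulmxV // mul1mx.
by rewrite det_mulmx det1D_rank1 mulmxA.
Qed.

Lemma det_Stilde (R : realType) (m : nat) (C : 'M[R[i]]_m) (kappa d : 'cV[R[i]]_m)
  (w0 gamma w : R) : C \in unitmx ->
  \det (Stilde C kappa d w0 gamma w) = \det C *
    (1 + (gamma +i* (w0 - w))^-1 * (kappa^T *m invmx C *m d) ord0 ord0).
Proof.
move=> C_unit; rewrite /Stilde.
have -> : - 'i%C * (w - w0)%:C + gamma%:C = gamma +i* (w0 - w) :> R[i].
  by apply/eqP; rewrite eq_complex /=; apply/andP; split; apply/eqP; ring.
rewrite scalemxAl det_addmx_rank1 //.
by rewrite -scalemxAr mxE.
Qed.

Section Polar.
Context {R : realType}.
Implicit Types (c k t x y : R) (z : R[i]) (f g : R -> R[i]) (theta phi : R -> R).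

Definition expi t : R[i] := cos t +i* sin t.

Lemma norm_expi t : `|expi t| = 1.
Proof. by rewrite normc_def /= cos2Dsin2 sqrtr1. Qed.

Lemma expi_neq0 t : expi t != 0.
Proof. by rewrite -normr_eq0 norm_expi oner_eq0. Qed.

Lemma expiD x y : expi (x + y) = expi x * expi y.
Proof. by rewrite /expi cosD sinD; apply/eqP; rewrite eq_complex /= eqxx /= addrC eqxx. Qed.

Lemma expiN t : expi (- t) = (expi t)^-1.
Proof.
apply: (mulfI (expi_neq0 t)); rewrite -expiD subrr mulfV ?expi_neq0 //.
by rewrite /expi cos0 sin0.
Qed.

Lemma expiDpi t : expi (pi + t) = - expi t.
Proof. by rewrite addrC /expi cosDpi sinDpi. Qed.

Lemma polar_Re_gt0 x y : 0 < x -> x +i* y = `|x +i* y| * expi (atan (y / x)).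
Proof.
move=> x_gt0; set s := Num.sqrt (1 + (y / x) ^+ 2).
have s_gt0 : 0 < s by rewrite sqrtr_gt0 ltr_pwDl // sqr_ge0.
have sin_atan : sin (atan (y / x)) = y / x / s.
  by rewrite -{2}(atanK (y / x)) /tan cos_atan -/s invrK mulfK // gt_eqF.
have norm_eq : Num.sqrt (x ^+ 2 + y ^+ 2) = x * s.
  rewrite /s -[X in X * _](ger0_norm (ltW x_gt0)) -sqrtr_sqr -sqrtrM ?sqr_ge0 //.
  by congr Num.sqrt; field; rewrite gt_eqF.
rewrite normc_def /= norm_eq /expi cos_atan sin_atan -/s; apply/eqP.
by rewrite eq_complex /=; apply/andP; split; apply/eqP; field; rewrite !gt_eqF.
Qed.

Lemma polar_Re_lt0 x y : x < 0 -> x +i* y = `|x +i* y| * expi (pi - atan (y / - x)).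
Proof.
move=> x_lt0; have := @polar_Re_gt0 (- x) (- y); rewrite oppr_gt0 => /(_ x_lt0).
rewrite -[- x +i* - y]/(- (x +i* y)) normrN => polar_opp.
by rewrite -[LHS]opprK {1}polar_opp -mulrN mulNr atanN expiDpi.
Qed.

Lemma polar_exists z : exists t, z = `|z| * expi t.
Proof.
case: z => x y; case: (ltgtP x 0) => [x_lt0 | x_gt0 | ->].
- by eexists; exact: polar_Re_lt0.
- by eexists; exact: polar_Re_gt0.
have norm_iy : `|0 +i* y| = `|y|%:C by rewrite normc_def /= expr0n add0r sqrtr_sqr.
rewrite norm_iy; case: (ger0P y) => [y_ge0 | y_lt0].
- exists (pi / 2); rewrite /expi cos_pihalf sin_pihalf.
  by apply/eqP; rewrite eq_complex /=; apply/andP; split; apply/eqP; ring.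
- exists (- (pi / 2)); rewrite /expi cosN sinN cos_pihalf sin_pihalf.
  by apply/eqP; rewrite eq_complex /=; apply/andP; split; apply/eqP; ring.
Qed.

Lemma polar_lift_cst {z t} : z = `|z| * expi t -> polar_lift (fun=> z) (fun=> t).
Proof. by move=> z_polar; split => // w; exact: cst_continuous. Qed.

Lemma polar_liftM {f g theta phi} : polar_lift f theta -> polar_lift g phi ->
  polar_lift (fun w => f w * g w) (fun w => theta w + phi w).
Proof.
move=> [theta_cont f_polar] [phi_cont g_polar]; split.
  by move=> w; apply: cvgD; [exact: theta_cont | exact: phi_cont].
move=> w; rewrite normrM -/(expi _) expiD {1}[f w]f_polar {1}[g w]g_polar.
by rewrite mulrACA.
Qed.

Lemma polar_liftV {f theta} : polar_lift f theta ->
  polar_lift (fun w => (f w)^-1) (fun w => - theta w).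
Proof.
move=> [theta_cont f_polar]; split; first by move=> w; apply: cvgN; exact: theta_cont.
by move=> w; rewrite normfV -/(expi _) expiN {1}[f w]f_polar invfM.
Qed.

Lemma continuous_atan_line c k : continuous (fun w => atan ((c - w) / k)).
Proof.
move=> w; apply: continuous_comp; last exact: continuous_atan.
by apply: cvgM; [apply: cvgB; [exact: cvg_cst | exact: cvg_id] | exact: cvg_cst].
Qed.

Lemma polar_lift_line_gt0 c k : 0 < k ->
  polar_lift (fun w => k +i* (c - w)) (fun w => atan ((c - w) / k)).
Proof.
by move=> k_gt0; split; [exact: continuous_atan_line | move=> w; exact: polar_Re_gt0].
Qed.

Lemma polar_lift_line_lt0 c k : k < 0 ->
  polar_lift (fun w => k +i* (c - w)) (fun w => pi - atan ((c - w) / - k)).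
Proof.
move=> k_lt0; split; last by move=> w; exact: polar_Re_lt0.
by move=> w; apply: cvgB; [exact: cvg_cst | exact: continuous_atan_line].
Qed.

Lemma continuous_cos_eq1_constant (d : R -> R) : continuous d ->
  (forall w, cos (d w) = 1) -> forall x y, d x = d y.
Proof.
have not_increasing (e : R -> R) x y : continuous e -> (forall w, cos (e w) = 1) ->
    x <= y -> ~ e x < e y.
  move=> e_cont cos_e1 le_xy lt_exy.
  pose t := Num.min pi (e y - e x).
  have t_gt0 : 0 < t by rewrite lt_min pi_gt0 subr_gt0.
  have t_le_pi : t <= pi by rewrite ge_min lexx.
  have [c _ ec] : exists2 c, c \in `[x, y]%R & e c = e x + t.
    apply: IVT => //; first exact: continuous_subspaceT.
    rewrite (min_idPl (ltW lt_exy)) (max_idPr (ltW lt_exy)) lerDl (ltW t_gt0) /=.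
    by rewrite -lerBrDl ge_min lexx orbT.
  have sin_ex0 : sin (e x) = 0 by apply: cos1sin0; rewrite cos_e1 normr1.
  have cos_t1 : cos t = 1.
    by rewrite -(cos_e1 c) ec cosD sin_ex0 cos_e1 mul1r mul0r subr0.
  have : cos t < cos 0.
    by rewrite ltr_cos // in_itv /= ?lexx ?pi_ge0 // (ltW t_gt0) t_le_pi.
  by rewrite cos_t1 cos0 ltxx.
move=> d_cont cos_d1 x y.
wlog le_xy : x y / x <= y.
  by move=> le_const; case: (leP x y) => [/le_const // | /ltW /le_const ->].
apply/eqP; rewrite eq_le !leNgt; apply/andP; split; apply/negP.
- move=> lt_dyx; apply: (not_increasing (fun w => - d w) x y) => //.
  + by move=> w; apply: cvgN; exact: d_cont.
  + by move=> w; rewrite cosN.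
  + by rewrite ltrN2.
- exact: not_increasing.
Qed.

Lemma polar_lift_unique {f theta phi} : (forall w, f w != 0) ->
  polar_lift f theta -> polar_lift f phi -> exists k, forall w, phi w = theta w + k.
Proof.
move=> f_neq0 [theta_cont f_theta] [phi_cont f_phi].
have cos_diff1 w : cos (phi w - theta w) = 1.
  have norm_neq0 : `|f w| != 0 by rewrite normr_eq0.
  have expi_eq : expi (phi w) = expi (theta w).
    by apply: (mulfI norm_neq0); rewrite -f_phi -f_theta.
  have := congr1 (@complex.Re R) (expiD (phi w) (- theta w)).
  by rewrite expiN expi_eq mulfV ?expi_neq0.
have diff_cont : continuous (fun w => phi w - theta w).
  by move=> w; apply: cvgB; [exact: phi_cont | exact: theta_cont].
exists (phi 0 - theta 0) => w.
by rewrite -(continuous_cos_eq1_constant _ diff_cont cos_diff1 w 0) addrC subrK.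
Qed.

Lemma winding_number_is_lift {f theta} (n : int) (a b : R) : (forall w, f w != 0) ->
  polar_lift f theta -> theta x @[x --> -oo] --> a -> theta x @[x --> +oo] --> b ->
  b - a = n%:~R * (2 * pi) -> winding_number_is f n.
Proof.
move=> f_neq0 f_theta theta_a theta_b ba; split; first by exists theta.
move=> phi f_phi; have [k phiE] := polar_lift_unique f_neq0 f_theta f_phi.
exists (a + k), (b + k); rewrite (funext phiE); split; last split.
- by apply: cvgD => //; exact: cvg_cst.
- by apply: cvgD => //; exact: cvg_cst.
- by rewrite -ba opprD addrACA subrr addr0.
Qed.

Lemma cvgNy_atan_line c k : 0 < k -> atan ((c - w) / k) @[w --> -oo] --> pi / 2.
Proof.
move=> k_gt0; apply: (cvg_comp (fun w => (c - w) / k) _ _ (@cvgy_atan R)).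
apply/cvgryPge => A; near=> w; rewrite ler_pdivlMr // lerBrDl -lerBrDr.
by near: w; exact: nbhs_ninfty_le (num_real _).
Unshelve. all: end_near. Qed.

Lemma cvgy_atan_line c k : 0 < k -> atan ((c - w) / k) @[w --> +oo] --> - (pi / 2).
Proof.
move=> k_gt0; under eq_fun do rewrite -opprB mulNr atanN.
apply: cvgN.
apply: (cvg_comp (fun w => (w - c) / k) _ _ (@cvgy_atan R)).
apply/cvgryPge => A; near=> w; rewrite ler_pdivlMr // lerBrDr.
by near: w; exact: nbhs_pinfty_ge (num_real _).
Unshelve. all: end_near. Qed.

End Polar.

Lemma cvg_mulr1D0 (T : Type) (K : numFieldType) (F : set_system T) (g : T -> K^o)
  (c b : K^o) : Filter F -> g @ F --> (0 : K^o) -> (fun t => c * (1 + g t * b)) @ F --> c.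
Proof.
move=> F_filter g0.
have := cvgM (cvg_cst c) (cvgD (cvg_cst (1 : K^o)) (cvgM g0 (cvg_cst b))).
by rewrite mul0r addr0 mulr1; apply.
Qed.

Section LorentzCurve.
Context {R : realType}.
Variables (D a : R[i]) (w0 gamma : R).
Hypothesis gamma_gt0 : 0 < gamma.

Definition den (w : R) : R[i] := gamma +i* (w0 - w).

Definition lorentz_curve (w : R) : R[i] := D * (1 + (den w)^-1 * a).

Definition curve_center : R[i] := D * (1 + a / (2 * gamma)%:C).

Definition curve_radius : R := Normc.normc (D * a) / (2 * gamma).

Lemma den_neq0 w : den w != 0.
Proof. by rewrite eq_complex /= negb_and gt_eqF. Qed.

Lemma gammaC_neq0 : gamma%:C != 0 :> R[i].
Proof. by rewrite eq_complex /= negb_and gt_eqF. Qed.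

Lemma inv_den_on_circle w :
  `|(den w)^-1 - ((2 * gamma)^-1)%:C| = ((2 * gamma)^-1)%:C.
Proof.
have -> : (den w)^-1 - ((2 * gamma)^-1)%:C = (den w)^*%C / (den w * (2 * gamma)%:C).
  have -> : (den w)^*%C = (2 * gamma)%:C - den w.
    by apply/eqP; rewrite eq_complex /=; apply/andP; split; apply/eqP; ring.
  by rewrite fmorphV /=; field; rewrite gammaC_neq0 den_neq0.
rewrite normrM normfV normrM normcJ invfM mulrA mulfV ?normr_eq0 ?den_neq0 // mul1r.
by rewrite gtr0_norm ?fmorphV // ltcR mulr_gt0.
Qed.

Lemma inv_den_onto u : u != 0 ->
  `|u - ((2 * gamma)^-1)%:C| = ((2 * gamma)^-1)%:C -> exists w, (den w)^-1 = u.
Proof.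
case: u => x y u_neq0; rewrite normc_def /= => /complexI.
move/(congr1 (fun t => t ^+ 2)); rewrite sqr_sqrtr ?addr_ge0 ?sqr_ge0 // => on_circle.
have norm2E : x ^+ 2 + y ^+ 2 = x / gamma.
  have expand : x ^+ 2 + y ^+ 2
      = (x - (2 * gamma)^-1) ^+ 2 + (y - 0) ^+ 2 - (2 * gamma)^-1 ^+ 2 + x / gamma.
    by field; rewrite gt_eqF.
  by rewrite expand on_circle subrr add0r.
have x_neq0 : x != 0.
  apply: contra u_neq0 => /eqP x0; move: norm2E; rewrite x0 mul0r expr0n add0r.
  by move/eqP; rewrite sqrf_eq0 => /eqP ->.
exists (w0 + y * gamma / x); rewrite -[RHS]invrK; congr (_^-1).
apply: (mulIf u_neq0); rewrite mulVf //; apply/eqP.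
rewrite eq_complex /=; apply/andP; split; apply/eqP.
- transitivity (gamma * (x ^+ 2 + y ^+ 2) / x); first by field.
  by rewrite norm2E; field; rewrite x_neq0 gt_eqF.
- by field.
Qed.

Lemma inv_den_cvg0 (F : set_system R) : ProperFilter F ->
  `|w - w0| @[w --> F] --> +oo -> ((den w)^-1 : R[i]^o) @[w --> F] --> (0 : R[i]^o).
Proof.
(* the norm of R[i] is R[i]-valued, so eps is a positive real seen in R[i] *)
move=> F_proper /cvgryPgt norm_cvgy; apply/cvgr0Pnorm_lt => eps.
rewrite ltcE /= => /andP[/eqP Im_eps0 Re_eps_gt0].
have -> : eps = (complex.Re eps)%:C by apply/eqP; rewrite eq_complex /= Im_eps0 !eqxx.
apply: filterS (norm_cvgy (complex.Re eps)^-1) => w lt_norm.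
have norm_gt0 : 0 < `|w - w0| by apply: lt_trans lt_norm; rewrite invr_gt0.
rewrite normfV normc_def /= -fmorphV ltcR.
rewrite invf_plt ?posrE ?sqrtr_gt0 ?ltr_pwDl ?sqr_ge0 ?exprn_gt0 //.
apply: (lt_le_trans lt_norm); rewrite distrC -sqrtr_sqr ler_sqrt ?addr_ge0 ?sqr_ge0 //.
by rewrite lerDr sqr_ge0.
Qed.

Lemma lorentz_curve_cvg (F : set_system R) : ProperFilter F ->
  `|w - w0| @[w --> F] --> +oo -> (lorentz_curve : R -> R[i]^o) @ F --> (D : R[i]^o).
Proof. by move=> F_proper /inv_den_cvg0; exact: cvg_mulr1D0. Qed.

Lemma lorentz_curve_cvgy : (lorentz_curve : R -> R[i]^o) @ +oo --> (D : R[i]^o).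
Proof.
apply: lorentz_curve_cvg; apply/cvgryPge => A; near=> w.
rewrite (le_trans _ (ler_norm _)) // lerBrDr.
by near: w; exact: nbhs_pinfty_ge (num_real _).
Unshelve. all: end_near. Qed.

Lemma lorentz_curve_cvgNy : (lorentz_curve : R -> R[i]^o) @ -oo --> (D : R[i]^o).
Proof.
apply: lorentz_curve_cvg; apply/cvgryPge => A; near=> w.
rewrite distrC (le_trans _ (ler_norm _)) // lerBrDr -lerBrDl.
by near: w; exact: nbhs_ninfty_le (num_real _).
Unshelve. all: end_near. Qed.

Lemma curve_radiusE : curve_radius%:C = `|D * a| / (2 * gamma)%:C.
Proof. by rewrite rmorphM fmorphV. Qed.

Lemma curve_radius_ge0 : 0 <= curve_radius.
Proof.
apply: divr_ge0; last by rewrite mulr_ge0 // ltW.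
by rewrite -ler0c; exact: (normr_ge0 (D * a) : 0 <= (Normc.normc (D * a))%:C).
Qed.

Lemma norm_two_gammaC : `|(2 * gamma)%:C| = (2 * gamma)%:C :> R[i].
Proof. by rewrite ger0_norm // ler0c mulr_ge0 // ltW. Qed.

Lemma lorentz_curve_on_circle w : `|lorentz_curve w - curve_center| = curve_radius%:C.
Proof.
have -> : lorentz_curve w - curve_center = D * a * ((den w)^-1 - ((2 * gamma)^-1)%:C).
  by rewrite /lorentz_curve /curve_center fmorphV /=; ring.
by rewrite normrM inv_den_on_circle curve_radiusE fmorphV.
Qed.

Lemma det_on_circle : `|D - curve_center| = curve_radius%:C.
Proof.
have -> : D - curve_center = - (D * a) / (2 * gamma)%:C.
  by rewrite /curve_center; field; rewrite gammaC_neq0.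
by rewrite normrM normfV normrN norm_two_gammaC curve_radiusE.
Qed.

Lemma lorentz_curve_onto z : `|z - curve_center| = curve_radius%:C -> z != D ->
  exists w, lorentz_curve w = z.
Proof.
move=> z_on_circle z_neq_D.
have Da_neq0 : D * a != 0.
  apply: contra z_neq_D => /eqP Da0; move: z_on_circle.
  rewrite curve_radiusE Da0 normr0 mul0r => /eqP; rewrite normr_eq0 subr_eq0 => /eqP ->.
  by rewrite /curve_center mulrDr mulr1 mulrA Da0 mul0r addr0.
pose u := (z - D) / (D * a).
have zE : z = D + D * a * u by rewrite /u mulrC divfK // addrC subrK.
have [w den_wE] : exists w, (den w)^-1 = u.
  apply: inv_den_onto.
    by rewrite /u mulf_neq0 ?invr_eq0 // subr_eq0.
  have norm_Da_neq0 : `|D * a| != 0 by rewrite normr_eq0.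
  apply: (mulfI norm_Da_neq0); rewrite -normrM.
  have <- : z - curve_center = D * a * (u - ((2 * gamma)^-1)%:C).
    by rewrite zE /curve_center fmorphV /=; ring.
  by rewrite z_on_circle curve_radiusE fmorphV.
by exists w; rewrite /lorentz_curve den_wE zE; ring.
Qed.

Lemma norm_center_eq_radius : gamma + complex.Re a = 0 ->
  `|curve_center| = curve_radius%:C.
Proof.
move=> gamma_Re_a0.
have two_gamma_a : (2 * gamma)%:C + a = - a^*%C.
  move: gamma_Re_a0; case: a => p q /= gamma_p0.
  by apply/eqP; rewrite eq_complex /=; apply/andP; split; apply/eqP; lra.
have -> : curve_center = D * ((2 * gamma)%:C + a) / (2 * gamma)%:C.
  by rewrite /curve_center; field; rewrite gammaC_neq0.
rewrite two_gamma_a normrM normfV normrM normrN normcJ norm_two_gammaC.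
by rewrite -normrM curve_radiusE.
Qed.

Lemma den_addE w : den w + a = (gamma + complex.Re a) +i* ((w0 + complex.Im a) - w).
Proof.
by case: a => p q; apply/eqP; rewrite eq_complex /=; apply/andP; split; apply/eqP; ring.
Qed.

Lemma lorentz_curveE w : lorentz_curve w = D * (den w + a) * (den w)^-1.
Proof. by rewrite /lorentz_curve; field; rewrite den_neq0. Qed.

Hypothesis D_neq0 : D != 0.
Hypothesis gamma_Re_a_neq0 : gamma + complex.Re a != 0.

Lemma lorentz_curve_neq0 w : lorentz_curve w != 0.
Proof.
rewrite lorentz_curveE !mulf_neq0 ?invr_eq0 ?den_neq0 //.
by rewrite den_addE eq_complex /= negb_and gamma_Re_a_neq0.
Qed.

(* the lift of den runs from pi/2 down to -pi/2, hence the extra pi *)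
Lemma lorentz_curve_winding {alpha : R -> R} {A B : R} {n : int} :
  polar_lift (fun w => den w + a) alpha ->
  alpha x @[x --> -oo] --> A -> alpha x @[x --> +oo] --> B ->
  B - A + pi = n%:~R * (2 * pi) -> winding_number_is lorentz_curve n.
Proof.
move=> alpha_lift alphaA alphaB BA.
have [phi D_polar] := polar_exists D.
have den_lift := polar_lift_line_gt0 w0 _ gamma_gt0.
have curve_lift : polar_lift lorentz_curve
    (fun w => phi + alpha w + - atan ((w0 - w) / gamma)).
  rewrite (funext lorentz_curveE).
  exact (polar_liftM (polar_liftM (polar_lift_cst D_polar) alpha_lift) (polar_liftV den_lift)).
apply: (winding_number_is_lift n (phi + A - pi / 2) (phi + B + pi / 2)
          lorentz_curve_neq0 curve_lift).
- apply: cvgD; last by apply: cvgN; exact: cvgNy_atan_line.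
  by apply: cvgD => //; exact: cvg_cst.
- apply: cvgD; last by rewrite -[X in _ --> X]opprK; apply: cvgN; exact: cvgy_atan_line.
  by apply: cvgD => //; exact: cvg_cst.
- by rewrite -BA; field.
Qed.

Lemma lorentz_curve_winding0 : 0 < gamma + complex.Re a -> winding_number_is lorentz_curve 0.
Proof.
move=> k_gt0; have := polar_lift_line_gt0 (w0 + complex.Im a) _ k_gt0.
rewrite -(funext den_addE) => alpha_lift.
apply: (lorentz_curve_winding alpha_lift
          (cvgNy_atan_line _ _ k_gt0) (cvgy_atan_line _ _ k_gt0)).
by rewrite mul0r; field.
Qed.

Lemma lorentz_curve_winding1 : gamma + complex.Re a < 0 -> winding_number_is lorentz_curve 1.
Proof.
move=> k_lt0; have := polar_lift_line_lt0 (w0 + complex.Im a) _ k_lt0.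
rewrite -(funext den_addE) => alpha_lift.
rewrite -oppr_gt0 in k_lt0.
apply: (lorentz_curve_winding alpha_lift
          (cvgB (cvg_cst _) (cvgNy_atan_line _ _ k_lt0))
          (cvgB (cvg_cst _) (cvgy_atan_line _ _ k_lt0))).
by rewrite mul1r; field.
Qed.

End LorentzCurve.

Theorem mainTheorem2 (R : realType) (m : nat) (hm : (1 <= m)%N) (w0 gamma : R)
  (hgamma : 0 < gamma) (C : 'M[R[i]]_m) (hC : C \in unitmx)
  (kappa d : 'cV[R[i]]_m) :
  let f : R -> R[i] := fun w : R => \det (Stilde C kappa d w0 gamma w) in
  let rho := rhotilde C kappa d gamma in
  ((f : R -> R[i]^o) w @[w --> +oo] --> (\det C : R[i]^o)) /\ ((f : R -> R[i]^o) w @[w --> -oo] --> (\det C : R[i]^o)) /\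
  exists (c : R[i]) (r : R), 0 <= r /\
    (* the curve lies on the circle |z - c| = r, which contains det C, and
       covers every point of the circle other than det C *)
    (forall w : R, `|f w - c| = r%:C) /\
    `|\det C - c| = r%:C /\
    (forall z : R[i], `|z - c| = r%:C -> z != \det C -> exists w : R, f w = z) /\
    (complex.Re rho = (1 / 2 : R) -> `|c| = r%:C) /\
    (complex.Re rho != (1 / 2 : R) ->
       (forall w : R, f w != 0) /\
       (complex.Re rho < (1 / 2 : R) -> winding_number_is f 0) /\
       (complex.Re rho > (1 / 2 : R) -> winding_number_is f 1)).
Proof.
move=> f rho.
set D := \det C; set a := (kappa^T *m invmx C *m d) ord0 ord0.
have D_neq0 : D != 0 by rewrite -unitfE -unitmxE.
have -> : f = lorentz_curve D a w0 gamma by apply/funext => w; exact: det_Stilde.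
have two_gamma_gt0 : 0 < 2 * gamma by rewrite mulr_gt0.
have gamma_Re_aE : gamma + complex.Re a = (1 / 2 - complex.Re rho) * (2 * gamma).
  rewrite /rho /rhotilde -/a -fmorphV; case: a => p q /=.
  by field; rewrite gt_eqF.
split; first exact: lorentz_curve_cvgy.
split; first exact: lorentz_curve_cvgNy.
exists (curve_center D a gamma), (curve_radius D a gamma).
split; first exact: curve_radius_ge0.
split; first exact: lorentz_curve_on_circle.
split; first exact: det_on_circle.
split; first exact: lorentz_curve_onto.
split.
  move=> Re_rho_half; apply: norm_center_eq_radius hgamma _.
  by rewrite gamma_Re_aE Re_rho_half subrr mul0r.
move=> Re_rho_neq_half.
have gamma_Re_a_neq0 : gamma + complex.Re a != 0.
  rewrite gamma_Re_aE; apply: mulf_neq0; last exact: lt0r_neq0.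
  by rewrite subr_eq0 eq_sym.
split; first exact: lorentz_curve_neq0.
split=> [lt_half | gt_half].
- by apply: lorentz_curve_winding0 => //; rewrite gamma_Re_aE pmulr_lgt0 // subr_gt0.
- by apply: lorentz_curve_winding1 => //; rewrite gamma_Re_aE pmulr_llt0 // subr_lt0.
Qed.
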